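(* Let $G$ be an additive group and let $X$, $\preceq$, $\rho$ be as described below. Then the metric space $(X,\rho)$ is geodesic and $(X,\rho,\preceq)$ is a metric $\vee$-semilattice.
   Context: A function on an interval $(\alpha,\beta)$ is piecewise constant from the left if for every $x$ there is $\varepsilon>0$ with $f$ constant on $[x-\varepsilon,x]$. $X$ is the set of pairs $(f,a_f)$, $a_f>0$ real, $f:(a_f,+\infty)\to G$ piecewise constant from the left with $f|_{(b_f,+\infty)}\equiv0$ for some $b_f\ge a_f$. Order: $(f,a_f)\preceq(g,a_g)$ iff $a_f\le a_g$ and $f|_{(a_g,+\infty)}=g$; $(X,\preceq)$ is a $\vee$-semilattice, with supremum denoted $p\vee q$. Metric: $\rho((f,a_f),(g,a_g))=|a_f-a_g|$ if the two pairs are comparable, and $\rho(p,q)=\rho(p,p\vee q)+\rho(p\vee q,q)$ if $p,q$ are incomparable. A metric space is geodesic if any two points are joined by a segment (an isometric image of a real segment). $(X,\rho,\preceq)$ is a metric $\vee$-semilattice if (1) $x\preceq z\preceq y$ implies $\rho(x,z)+\rho(z,y)=\rho(x,y)$, and (2) $\rho(x,y)=\rho(x,x\vee y)+\rho(x\vee y,y)$ for all $x,y$. *)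

From mathcomp Require Import ssreflect ssrfun ssrbool eqtype ssralg.
From Stdlib Require Import Reals ClassicalEpsilon.
Set Implicit Arguments. Unset Strict Implicit.
Local Open Scope R_scope.

(* The function f : (a_f,+oo) -> G is encoded as a
   total function R -> G normalized to be 0 outside its domain (x <= a_f),
   so that equality of elements of X is equality of pairs (f, a_f). *)
Record Xel (G : zmodType) := MkX {
  xa : R;
  xf : R -> G;
  xa_pos : 0 < xa;
  xf_out : forall x, x <= xa -> xf x = GRing.zero;
  xf_plc : forall x, xa < x -> exists eps, 0 < eps /\ xa < x - eps /\
             forall y, x - eps <= y <= x -> xf y = xf x;
  xf_zero : exists b, xa <= b /\ forall x, b < x -> xf x = GRing.zero
}.

Definition Xle (G : zmodType) (p q : Xel G) : Prop :=
  xa p <= xa q /\ forall x, xa q < x -> xf p x = xf q x.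

Definition Xcomparable (G : zmodType) (p q : Xel G) : Prop :=
  Xle p q \/ Xle q p.

Definition is_sup (T : Type) (le : T -> T -> Prop) (p q j : T) : Prop :=
  le p j /\ le q j /\ forall u, le p u -> le q u -> le j u.

(* p \/ q : the supremum (chosen by classical choice; it exists, see lemma5) *)
Definition Xjoin (G : zmodType) (p q : Xel G) : Xel G :=
  epsilon (inhabits p) (is_sup (@Xle G) p q).

Definition Xrho (G : zmodType) (p q : Xel G) : R :=
  if excluded_middle_informative (Xcomparable p q) then Rabs (xa p - xa q)
  else Rabs (xa p - xa (Xjoin p q)) + Rabs (xa (Xjoin p q) - xa q).

Definition partial_order (T : Type) (le : T -> T -> Prop) : Prop :=
  (forall x, le x x) /\ (forall x y, le x y -> le y x -> x = y) /\
  (forall x y z, le x y -> le y z -> le x z).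

Definition join_semilattice (T : Type) (le : T -> T -> Prop) : Prop :=
  partial_order le /\ forall x y, exists j, is_sup le x y j.

Definition metric (T : Type) (d : T -> T -> R) : Prop :=
  (forall x y, d x y = 0 <-> x = y) /\ (forall x y, d x y = d y x) /\
  (forall x y z, d x z <= d x y + d y z).

Definition geodesic (T : Type) (d : T -> T -> R) : Prop :=
  forall x y, exists g : R -> T, g 0 = x /\ g (d x y) = y /\
    forall s t, 0 <= s <= d x y -> 0 <= t <= d x y ->
      d (g s) (g t) = Rabs (s - t).

Definition metric_join_semilattice (T : Type) (d : T -> T -> R)
    (le : T -> T -> Prop) (join : T -> T -> T) : Prop :=
  (forall x y z, le x z -> le z y -> d x z + d z y = d x y) /\
  (forall x y, d x y = d x (join x y) + d (join x y) y).

From mathcomp Require Import ssreflect ssralg.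
From Stdlib Require Import Reals Lra Classical ClassicalEpsilon FunctionalExtensionality ProofIrrelevance.
Set Implicit Arguments. Unset Strict Implicit.
Local Open Scope R_scope.

(* Above any p the order is a chain: the elements u with p ⪯ u are exactly the
   truncations of p at the levels t >= a_p, and u ↦ a_u identifies this chain
   with [a_p, +oo).  The join of p and q is the truncation of p at the least
   level beyond which f_p and f_q agree, which exists because both functions
   vanish eventually.  Hence rho(p, q) = (a_J - a_p) + (a_J - a_q) with
   J = p ∨ q.  The triangle inequality holds because p ∨ q and q ∨ r both lie
   above q and are therefore comparable, and a geodesic from p to q climbs the
   chain above p up to J and then descends the chain above q. *)

Section XSemilattice.

Variable G : zmodType.
Implicit Types p q r u v : Xel G.

Lemma Xel_eq p q : xa p = xa q -> (forall x, xf p x = xf q x) -> p = q.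
Proof.
case: p q => a f ? ? ? ? [a' f' ? ? ? ?] /= Ea /functional_extensionality Ef.
subst; f_equal; exact: proof_irrelevance.
Qed.

Lemma Xle_refl p : Xle p p.
Proof. by split; [lra|]. Qed.

Lemma Xle_trans p q r : Xle p q -> Xle q r -> Xle p r.
Proof.
move=> [pq_a pq_f] [qr_a qr_f]; split; first lra.
move=> x rx; rewrite pq_f ?qr_f //; lra.
Qed.

Lemma Xle_eq_xa p q : Xle p q -> xa p = xa q -> p = q.
Proof.
move=> [_ pq_f] Ea; apply: Xel_eq => // x.
case: (Rle_dec x (xa q)) => [xq | /Rnot_le_lt qx]; last exact: pq_f.
by rewrite !xf_out //; lra.
Qed.

Lemma Xle_antisym p q : Xle p q -> Xle q p -> p = q.
Proof. move=> pq qp; apply: (Xle_eq_xa pq); case: pq qp => ? _ [? _]; lra. Qed.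

Lemma Xle_upper_of_xa_le q u v : Xle q u -> Xle q v -> xa u <= xa v -> Xle u v.
Proof.
move=> [qu_a qu_f] [qv_a qv_f] uv; split=> // x vx.
rewrite -qu_f ?qv_f //; lra.
Qed.

Definition trunc_fun p t (x : R) : G :=
  match Rle_dec x (Rmax (xa p) t) with left _ => GRing.zero | right _ => xf p x end.

Lemma trunc_fun_above p t x : Rmax (xa p) t < x -> trunc_fun p t x = xf p x.
Proof. by rewrite /trunc_fun; case: Rle_dec => //; lra. Qed.

Lemma trunc_level_pos p t : 0 < Rmax (xa p) t.
Proof. have := Rmax_l (xa p) t; have := xa_pos p; lra. Qed.

Lemma trunc_fun_out p t x : x <= Rmax (xa p) t -> trunc_fun p t x = GRing.zero.
Proof. by rewrite /trunc_fun; case: Rle_dec. Qed.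

Lemma trunc_fun_plc p t x : Rmax (xa p) t < x ->
  exists eps, 0 < eps /\ Rmax (xa p) t < x - eps /\
    forall y, x - eps <= y <= x -> trunc_fun p t y = trunc_fun p t x.
Proof.
move=> tx; have pm := Rmax_l (xa p) t.
have [|eps [eps_pos [_ plc]]] := @xf_plc _ p x; first lra.
have [d [d_pos [d_eps d_gap]]] :
    exists d, 0 < d /\ d <= eps /\ d <= (x - Rmax (xa p) t) / 2.
  exists (Rmin eps ((x - Rmax (xa p) t) / 2)).
  split; [apply: Rmin_glb_lt; lra | split; [exact: Rmin_l | exact: Rmin_r]].
exists d; split; [lra | split; [lra |]] => y ?.
rewrite !trunc_fun_above; [apply: plc | |]; lra.
Qed.

Lemma trunc_fun_eventually_zero p t :
  exists b, Rmax (xa p) t <= b /\ forall x, b < x -> trunc_fun p t x = GRing.zero.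
Proof.
have [b [_ fb]] := xf_zero p.
exists (Rmax (Rmax (xa p) t) b); split; first exact: Rmax_l.
move=> x bx; have := Rmax_l (Rmax (xa p) t) b; have := Rmax_r (Rmax (xa p) t) b.
by move=> ? ?; rewrite trunc_fun_above ?fb //; lra.
Qed.

Definition trunc p t : Xel G :=
  @MkX G (Rmax (xa p) t) (trunc_fun p t) (trunc_level_pos p t)
    (@trunc_fun_out p t) (@trunc_fun_plc p t) (trunc_fun_eventually_zero p t).

Lemma xa_trunc p t : xa p <= t -> xa (trunc p t) = t.
Proof. exact: Rmax_right. Qed.

Lemma le_trunc p t : Xle p (trunc p t).
Proof. by split=> [|x tx /=]; [exact: Rmax_l | rewrite trunc_fun_above]. Qed.

Lemma trunc_le p u t : Xle p u -> t <= xa u -> Xle (trunc p t) u.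
Proof.
move=> [pu_a pu_f] tu; have := Rmax_lub _ _ _ pu_a tu.
by split=> // x ux /=; rewrite trunc_fun_above ?pu_f //; lra.
Qed.

Lemma trunc_upper p u : Xle p u -> trunc p (xa u) = u.
Proof.
move=> pu; apply: Xle_eq_xa; first by apply: trunc_le; [|lra].
by apply: xa_trunc; case: pu.
Qed.

Lemma trunc_xa p : trunc p (xa p) = p.
Proof. exact/trunc_upper/Xle_refl. Qed.

Lemma trunc_mono p s t : xa p <= s -> s <= t -> Xle (trunc p s) (trunc p t).
Proof. by move=> ps st; apply: trunc_le (le_trunc p t) _; rewrite xa_trunc; lra. Qed.

Lemma agreement_threshold p q :
  exists c, Rmax (xa p) (xa q) <= c /\ (forall x, c < x -> xf p x = xf q x) /\
    forall b, Rmax (xa p) (xa q) <= b -> (forall x, b < x -> xf p x = xf q x) -> c <= b.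
Proof.
set m := Rmax (xa p) (xa q).
pose S x := x = m \/ m < x /\ xf p x <> xf q x.
have S_bounded : bound S.
  have [bp [_ p0]] := xf_zero p; have [bq [_ q0]] := xf_zero q.
  exists (Rmax m (Rmax bp bq)) => x [-> | [_ pq]]; first exact: Rmax_l.
  apply: Rnot_lt_le => big; apply: pq.
  have := Rmax_r m (Rmax bp bq); have := Rmax_l bp bq; have := Rmax_r bp bq.
  by move=> ? ? ?; rewrite p0 ?q0 //; lra.
have [c [c_ub c_least]] := completeness S S_bounded (ex_intro _ m (or_introl eq_refl)).
exists c; split; [|split].
- by apply: c_ub; left.
- move=> x cx; apply: NNPP => pq.
  have mc : m <= c by apply: (c_ub); left.
  have : x <= c by apply: (c_ub); right; split => //; lra.
  lra.
- move=> b mb agree; apply: c_least => x [-> | [_ pq]] //.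
  by apply: Rnot_lt_le => bx; apply/pq/agree.
Qed.

Lemma Xjoin_exists p q : exists j, is_sup (@Xle G) p q j.
Proof.
have [c [mc [agree least]]] := agreement_threshold p q.
have pm := Rmax_l (xa p) (xa q); have qm := Rmax_r (xa p) (xa q).
exists (trunc p c); split; [exact: le_trunc | split].
- split=> [|x]; rewrite xa_trunc; try lra.
  by move=> cx; rewrite -(proj2 (le_trunc p c)) ?agree ?xa_trunc //; lra.
- move=> u pu qu; apply: (trunc_le pu); apply: least.
  + by case: pu qu => ? _ [? _]; apply: Rmax_lub.
  + by move=> x ux; rewrite (proj2 pu x ux) (proj2 qu x ux).
Qed.

Lemma Xjoin_spec p q : is_sup (@Xle G) p q (Xjoin p q).
Proof. exact: epsilon_spec (Xjoin_exists p q). Qed.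

Lemma Xjoin_unique p q j : is_sup (@Xle G) p q j -> Xjoin p q = j.
Proof.
move=> [pj [qj j_least]]; have [pJ [qJ J_least]] := Xjoin_spec p q.
by apply: Xle_antisym; [apply: J_least | apply: j_least].
Qed.

Lemma Xjoin_r p q : Xle p q -> Xjoin p q = q.
Proof. by move=> pq; apply: Xjoin_unique; split; [|split; [exact: Xle_refl|]]. Qed.

Lemma Xjoin_comm p q : Xjoin p q = Xjoin q p.
Proof.
apply: Xjoin_unique; have [qJ [pJ J_least]] := Xjoin_spec q p.
by split; [|split] => // u pu qu; apply: J_least.
Qed.

Lemma Xjoin_trunc p q s t :
  xa p <= s <= xa (Xjoin p q) -> xa q <= t <= xa (Xjoin p q) ->
  Xjoin (trunc p s) (trunc q t) = Xjoin p q.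
Proof.
move=> ps qt; have [pJ [qJ J_least]] := Xjoin_spec p q.
apply: Xjoin_unique; split; [|split].
- by apply: trunc_le; [|lra].
- by apply: trunc_le; [|lra].
- move=> u pu qu; apply: J_least.
  + exact: Xle_trans (le_trunc p s) pu.
  + exact: Xle_trans (le_trunc q t) qu.
Qed.

Lemma Xrho_join p q :
  Xrho p q = (xa (Xjoin p q) - xa p) + (xa (Xjoin p q) - xa q).
Proof.
rewrite /Xrho; case: excluded_middle_informative => [[pq | qp] | _] /=.
- by rewrite Xjoin_r //; case: pq => ? _; rewrite Rabs_left1; lra.
- by rewrite Xjoin_comm Xjoin_r //; case: qp => ? _; rewrite Rabs_pos_eq; lra.
- have [[pJ _] [[qJ _] _]] := Xjoin_spec p q.
  by rewrite Rabs_left1 ?Rabs_pos_eq; lra.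
Qed.

Lemma Xrho_le p q : Xle p q -> Xrho p q = xa q - xa p.
Proof. by move=> pq; rewrite Xrho_join Xjoin_r //; lra. Qed.

Lemma Xrho_sym p q : Xrho p q = Xrho q p.
Proof. by rewrite !Xrho_join Xjoin_comm; lra. Qed.

Lemma Xrho_eq0 p q : Xrho p q = 0 <-> p = q.
Proof.
split=> [|<-]; last by rewrite Xrho_le; [lra | exact: Xle_refl].
have [pJ [qJ _]] := Xjoin_spec p q.
have [pJ_a _] := pJ; have [qJ_a _] := qJ.
rewrite Xrho_join => d0.
by transitivity (Xjoin p q); [apply: (Xle_eq_xa pJ) | symmetry; apply: (Xle_eq_xa qJ)]; lra.
Qed.

Lemma Xrho_triangle p q r : Xrho p r <= Xrho p q + Xrho q r.
Proof.
rewrite !Xrho_join.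
have [pJ [qJ _]] := Xjoin_spec p q; have [qK [rK _]] := Xjoin_spec q r.
have [_ [_ L_least]] := Xjoin_spec p r.
suff : xa (Xjoin p r) + xa q <= xa (Xjoin p q) + xa (Xjoin q r) by lra.
case: (Rle_dec (xa (Xjoin p q)) (xa (Xjoin q r))) => [JK | /Rnot_le_lt KJ].
- have [LK _] := L_least _ (Xle_trans pJ (Xle_upper_of_xa_le qJ qK JK)) rK.
  by case: qJ => ? _; lra.
- have [LJ _] := L_least _ pJ (Xle_trans rK (Xle_upper_of_xa_le qK qJ (Rlt_le _ _ KJ))).
  by case: qK => ? _; lra.
Qed.

Lemma Xrho_trunc p s t : xa p <= s -> xa p <= t ->
  Xrho (trunc p s) (trunc p t) = Rabs (s - t).
Proof.
move=> ps pt; case: (Rle_dec s t) => [st | /Rnot_le_lt ts].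
- rewrite Xrho_le; last exact: trunc_mono.
  by rewrite !xa_trunc // Rabs_left1; lra.
- rewrite Xrho_sym Xrho_le; last by apply: trunc_mono; lra.
  by rewrite !xa_trunc // Rabs_pos_eq; lra.
Qed.

Lemma Xrho_trunc_join p q s t :
  xa p <= s <= xa (Xjoin p q) -> xa q <= t <= xa (Xjoin p q) ->
  Xrho (trunc p s) (trunc q t) = (xa (Xjoin p q) - s) + (xa (Xjoin p q) - t).
Proof.
by move=> ps qt; rewrite Xrho_join Xjoin_trunc // !xa_trunc //; lra.
Qed.

Definition Xpath p q s : Xel G :=
  let A := xa (Xjoin p q) - xa p in
  match Rle_dec s A with
  | left _ => trunc p (xa p + s)
  | right _ => trunc q (xa (Xjoin p q) + A - s)
  end.

Lemma Xpath_up p q s : s <= xa (Xjoin p q) - xa p -> Xpath p q s = trunc p (xa p + s).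
Proof. by rewrite /Xpath; case: Rle_dec. Qed.

Lemma Xpath_down p q s : xa (Xjoin p q) - xa p <= s ->
  Xpath p q s = trunc q (xa (Xjoin p q) + (xa (Xjoin p q) - xa p) - s).
Proof.
rewrite /Xpath; case: Rle_dec => // sA As.
have [pJ [qJ _]] := Xjoin_spec p q.
have -> : s = xa (Xjoin p q) - xa p by lra.
have -> : xa p + (xa (Xjoin p q) - xa p) = xa (Xjoin p q) by ring.
have -> : xa (Xjoin p q) + (xa (Xjoin p q) - xa p) - (xa (Xjoin p q) - xa p) =
          xa (Xjoin p q) by ring.
by rewrite (trunc_upper pJ) (trunc_upper qJ).
Qed.

Lemma Xrho_geodesic : geodesic (@Xrho G).
Proof.
move=> p q; exists (Xpath p q); rewrite (Xrho_join p q).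
move: (Xjoin_spec p q) (@Xpath_up p q) (@Xpath_down p q) (@Xrho_trunc_join p q).
move: (Xjoin p q) => J [[pJ _] [[qJ _] _]] up down cross.
split; [|split].
- by rewrite up ?Rplus_0_r ?trunc_xa //; lra.
- rewrite down; last lra.
  have -> : xa J + (xa J - xa p) - (xa J - xa p + (xa J - xa q)) = xa q by ring.
  exact: trunc_xa.
- move=> s t s_in t_in.
  case: (Rle_dec s (xa J - xa p)) (Rle_dec t (xa J - xa p)) =>
    [sA | /Rnot_le_lt/Rlt_le As] [tA | /Rnot_le_lt/Rlt_le At].
  + rewrite up ?up // Xrho_trunc; try lra.
    by congr Rabs; ring.
  + by rewrite up ?down // cross ?Rabs_left1; lra.
  + by rewrite down ?up // Xrho_sym cross ?Rabs_pos_eq; lra.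
  + rewrite !down // Xrho_trunc; try lra.
    by rewrite Rabs_minus_sym; congr Rabs; ring.
Qed.

Lemma Xrho_between p q r : Xle p r -> Xle r q -> Xrho p r + Xrho r q = Xrho p q.
Proof. by move=> pr rq; rewrite !Xrho_le //; [lra | exact: Xle_trans pr rq]. Qed.

Lemma Xrho_via_join p q : Xrho p q = Xrho p (Xjoin p q) + Xrho (Xjoin p q) q.
Proof.
have [pJ [qJ _]] := Xjoin_spec p q.
by rewrite Xrho_join (Xrho_le pJ) Xrho_sym (Xrho_le qJ); lra.
Qed.

End XSemilattice.

Theorem lemma5 (G : zmodType) :
  join_semilattice (@Xle G) /\
  (forall p q : Xel G, is_sup (@Xle G) p q (Xjoin p q)) /\
  metric (@Xrho G) /\
  geodesic (@Xrho G) /\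
  metric_join_semilattice (@Xrho G) (@Xle G) (@Xjoin G).
Proof.
split; [|split; [exact: Xjoin_spec | split; [|split]]].
- split; first by split; [exact: Xle_refl | split; [exact: Xle_antisym | exact: Xle_trans]].
  by move=> p q; exists (Xjoin p q); exact: Xjoin_spec.
- by split; [exact: Xrho_eq0 | split; [exact: Xrho_sym | exact: Xrho_triangle]].
- exact: Xrho_geodesic.
- by split; [move=> p q r; exact: Xrho_between | exact: Xrho_via_join].
Qed.
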